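(* For $d\ge 4$ and $\ell\ge 4$, the cyclic Kautz digraph $CK(d,\ell)$ has diameter $D=2\ell-2$.
   Context: The cyclic Kautz digraph $CK(d,\ell)$ has vertex set $\{x_1\ldots x_\ell\in\mathbb Z_{d+1}^\ell : x_i\neq x_{i+1}\ (1\le i\le \ell-1),\ x_\ell\neq x_1\}$ and arcs $x_1x_2\ldots x_\ell\to x_2\ldots x_\ell y$ for every $y\in\mathbb Z_{d+1}$ with $y\neq x_2,x_\ell$. Distances are directed distances; the diameter is the maximum distance over all ordered pairs of vertices. *)

From mathcomp Require Import all_boot.
Set Implicit Arguments. Unset Strict Implicit. Unset Printing Implicit Defensive.

Definition word (d l : nat) := l.-tuple 'I_d.+1.

(* Vertex condition of CK(d,l): consecutive letters differ, and last <> first.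
   Indices are 0-based: x_{i+1} is tnth/nth at i. *)
Definition is_ck_vertex (d l : nat) (x : word d l) : bool :=
  [forall i : 'I_l, (i.+1 < l) ==> (nth ord0 x i != nth ord0 x i.+1)]
  && (nth ord0 x l.-1 != nth ord0 x 0).

Definition ck_arc (d l : nat) : rel (word d l) := fun x z =>
  [&& is_ck_vertex x, is_ck_vertex z &
      [exists y : 'I_d.+1,
         [&& val z == rcons (behead x) y,
             y != nth ord0 x 1 & y != nth ord0 x l.-1]]].

Definition walk_len (d l : nat) (u v : word d l) (k : nat) : Prop :=
  exists p : seq (word d l), size p = k /\ path (@ck_arc d l) u p /\ last u p = v.

Definition dist_le (d l : nat) (u v : word d l) (k : nat) : Prop :=
  exists2 j, j <= k & walk_len u v j.

Definition ck_diameter (d l D : nat) : Prop :=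
  (forall u v : word d l, is_ck_vertex u -> is_ck_vertex v -> dist_le u v D) /\
  (exists u v : word d l, [/\ is_ck_vertex u, is_ck_vertex v,
      dist_le u v D & ~ dist_le u v D.-1]).

From mathcomp Require Import all_boot zify.
Set Implicit Arguments. Unset Strict Implicit. Unset Printing Implicit Defensive.

(* A walk of length k from u to v in CK(d,l) is the same as a word of length
   l + k that starts with u, ends with v, and has no two equal letters at
   distance 1 or l - 1.  Upper bound: write u, then a gap of length m, then v;
   every gap letter is constrained by at most four already placed letters, so
   with d + 1 >= 5 letters the gap can be filled greedily, and m = l - 2
   (or m = l - 3 when the last letter of u is the first letter of v) suffices.
   Lower bound: for a suitable explicit pair, any shorter word either makes the
   two copies of u and v overlap inconsistently or repeats a letter at distance
   l - 1. *)

Section CKSequences.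

Variables (T : eqType) (x0 : T) (l : nat).

Definition ck_conflict (i j : nat) : bool := (j == i.+1) || (j == i + l.-1).

Definition ck_seq (s : seq T) : Prop :=
  forall i j, j < size s -> ck_conflict i j -> nth x0 s i != nth x0 s j.

Definition ck_joinable (s1 : seq T) (m : nat) (s2 : seq T) : Prop :=
  forall i j, i < size s1 -> j < size s2 -> ck_conflict i (size s1 + m + j) ->
    nth x0 s1 i != nth x0 s2 j.

Lemma ck_conflict_leq i j : ck_conflict i j -> i <= j.
Proof. by case/orP => /eqP ->; rewrite ?leq_addr. Qed.

Lemma ck_conflictD k i j : ck_conflict (k + i) (k + j) = ck_conflict i j.
Proof. by rewrite /ck_conflict -addnS -addnA !eqn_add2l. Qed.

Lemma ck_seq_next s i : ck_seq s -> i.+1 < size s -> nth x0 s i != nth x0 s i.+1.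
Proof. by move=> hs hi; apply: hs; rewrite // /ck_conflict eqxx. Qed.

Lemma ck_seq_far s i :
  ck_seq s -> i + l.-1 < size s -> nth x0 s i != nth x0 s (i + l.-1).
Proof. by move=> hs hi; apply: hs; rewrite // /ck_conflict eqxx orbT. Qed.

Lemma nth_cat_size s1 s2 j : nth x0 (s1 ++ s2) (size s1 + j) = nth x0 s2 j.
Proof. by rewrite nth_cat ltnNge leq_addr addKn. Qed.

Lemma ck_seq_cat s1 s2 :
  ck_seq (s1 ++ s2) <-> [/\ ck_seq s1, ck_seq s2 & ck_joinable s1 0 s2].
Proof.
split=> [hs | [hs1 hs2 hs12] i j].
  split=> [i j hj hij | i j hj hij | i j hi hj hij].
  - have hi := leq_ltn_trans (ck_conflict_leq hij) hj.
    by have := hs i j; rewrite !nth_cat hi hj size_cat; apply; rewrite ?ltn_addr.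
  - have := hs (size s1 + i) (size s1 + j).
    rewrite !nth_cat_size size_cat ck_conflictD.
    by apply=> //; lia.
  - have := hs i (size s1 + j); rewrite nth_cat hi nth_cat_size.
    by rewrite size_cat -(addn0 (size s1)); apply=> //; lia.
rewrite size_cat => hj hij.
have le_ij := ck_conflict_leq hij.
case: (ltnP j (size s1)) => hj1.
  by rewrite !nth_cat hj1 (leq_ltn_trans le_ij hj1); apply: hs1.
case: (ltnP i (size s1)) => hi1.
  rewrite !nth_cat hi1 (ltnNge j) hj1; apply: hs12 => //; first lia.
  by rewrite addn0 subnKC.
rewrite !nth_cat (ltnNge i) hi1 (ltnNge j) hj1; apply: hs2; first lia.
by rewrite -(ck_conflictD (size s1)) !subnKC.
Qed.

Lemma ck_joinable_rcons s1 s2 m y : ck_joinable s1 m.+1 s2 ->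
  y != nth x0 s2 0 -> y != nth x0 s2 (l.-1 - m.+1) -> ck_joinable (rcons s1 y) m s2.
Proof.
move=> h12 hy0 hy1 i j; rewrite size_rcons ltnS nth_rcons => hi hj.
case: ltnP => [hi1|hi1].
  by rewrite addSnnS; apply: h12.
rewrite (_ : i == size s1); last by apply/eqP; lia.
have -> : i = size s1 by lia.
rewrite /ck_conflict => /orP [] /eqP e.
  by rewrite (_ : j = 0) //; lia.
by rewrite (_ : j = l.-1 - m.+1) //; lia.
Qed.

Hypothesis l_gt1 : 1 < l.

Lemma ck_seq_cons a s : ck_seq (take l (a :: s)) -> ck_seq s -> ck_seq (a :: s).
Proof.
move=> hw hs [|i] j hj hij.
  have hjl : j < l by move: hij; rewrite /ck_conflict; case/orP => /eqP ->; lia.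
  have l_gt0 : 0 < l by lia.
  by have := hw 0 j; rewrite !nth_take // size_take_min; apply => //; lia.
case: j hj hij => [|j] hj hij.
  by move: hij; rewrite /ck_conflict; case/orP => /eqP; lia.
by apply: hs; rewrite // -(ck_conflictD 1).
Qed.

Lemma ck_seq_rcons s y : ck_seq s ->
  y != nth x0 s (size s).-1 -> y != nth x0 s (size s - l.-1) -> ck_seq (rcons s y).
Proof.
move=> hs hy1 hy2; rewrite -cats1; apply/ck_seq_cat; split=> //.
  by move=> i [|j] //= _; rewrite /ck_conflict; case/orP => /eqP; lia.
move=> i [|j] //= hi _; rewrite addn0 /ck_conflict eq_sym.
by case/orP => /eqP e; [rewrite (_ : i = (size s).-1) | rewrite (_ : i = size s - l.-1)];
  rewrite 1?eq_sym //; lia.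
Qed.

End CKSequences.

Lemma exists_notin (T : finType) (s : seq T) : size s < #|T| -> exists y, y \notin s.
Proof.
move=> hs; case: (pickP [pred y | y \notin s]) => [y hy | all_in]; first by exists y.
suff : #|T| <= size s by rewrite leqNgt hs.
apply: leq_trans (card_size s); apply/subset_leq_card/subsetP => y _.
by have /negbFE := all_in y.
Qed.

(* The next gap letter must avoid its predecessor, the letter [l - 1]
   positions back, and at most two letters of [s2] ahead. *)
Lemma ck_seq_fill_gap (T : finType) (x0 : T) l (s1 s2 : seq T) m :
  4 < #|T| -> 1 < l -> ck_seq x0 l s1 -> ck_seq x0 l s2 -> ck_joinable x0 l s1 m s2 ->
  exists2 w, size w = m & ck_seq x0 l (s1 ++ w ++ s2).
Proof.
move=> hT l_gt1; elim: m s1 => [|m IH] s1 hs1 hs2 h12.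
  by exists [::] => //; apply/ck_seq_cat.
have [y] := @exists_notin T [:: nth x0 s1 (size s1).-1; nth x0 s1 (size s1 - l.-1);
                               nth x0 s2 0; nth x0 s2 (l.-1 - m.+1)] hT.
rewrite !inE !negb_or => /and4P [hy1 hy2 hy3 hy4].
have [w sw hs] := IH (rcons s1 y) (ck_seq_rcons l_gt1 hs1 hy1 hy2) hs2
  (ck_joinable_rcons h12 hy3 hy4).
by exists (y :: w); rewrite /= ?sw // -cat_rcons.
Qed.

Section Walks.

Variables d l : nat.
Hypothesis l_gt1 : 1 < l.

Lemma word_eta (u : word d l) : val u = nth ord0 u 0 :: behead u.
Proof. by move: l_gt1; case: u => -[|a t] //= /eqP <-. Qed.

Lemma is_ck_vertexE (x : word d l) : is_ck_vertex x <-> ck_seq ord0 l x.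
Proof.
rewrite /is_ck_vertex /ck_seq size_tuple; split.
  case/andP => /forallP consec last_first i j hj /orP [] /eqP ej; subst j.
    by have := consec (Ordinal (ltnW hj)); rewrite /= hj.
  by rewrite (_ : i = 0) ?add0n 1?eq_sym //; lia.
move=> hx; apply/andP; split.
  by apply/forallP => i; apply/implyP => hi; apply: hx; rewrite // /ck_conflict eqxx.
by rewrite eq_sym; apply: hx; rewrite ?add0n /ck_conflict ?eqxx ?orbT //; lia.
Qed.

Lemma ck_arc_rcons (u w : word d l) y :
  val w = rcons (behead u) y -> ck_arc u w = is_ck_vertex u && is_ck_vertex w.
Proof.
move=> ew; rewrite /ck_arc; case: (is_ck_vertex u) => //=.
apply/andb_idr => /is_ck_vertexE hw; apply/existsP; exists y; rewrite ew eqxx /=.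
have nth_w k : k < l.-1 -> nth ord0 w k = nth ord0 u k.+1.
  by move=> hk; rewrite ew nth_rcons size_behead size_tuple hk nth_behead.
have w_last : nth ord0 w l.-1 = y.
  by rewrite ew nth_rcons size_behead size_tuple ltnn eqxx.
have w_far : nth ord0 w 0 != nth ord0 w l.-1.
  by apply: (ck_seq_far (i := 0)) => //; rewrite size_tuple; lia.
have w_next : nth ord0 w l.-2 != nth ord0 w l.-1.
  by rewrite -[l.-1](@prednK l.-1) ?(ck_seq_next hw) ?size_tuple //; lia.
rewrite w_last !nth_w ?prednK in w_far w_next; try lia.
by rewrite eq_sym w_far eq_sym w_next.
Qed.

Lemma walk_len_ck_seq (u v : word d l) k : is_ck_vertex u -> walk_len u v k ->
  exists2 ys, size ys = k & ck_seq ord0 l (val u ++ ys) /\ drop k (val u ++ ys) = val v.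
Proof.
move=> hu [p [<- [hp <-]]]; elim: p u hu hp => [|w p IH] u hu /=.
  by move=> _; exists [::]; rewrite ?cats0 ?drop0; split => //; apply/is_ck_vertexE.
case/andP => /and3P [_ hw /existsP [y /and3P [/eqP ew _ _]]] hp.
have [ys sz [hs hd]] := IH w hw hp.
have eu : val u ++ y :: ys = nth ord0 u 0 :: (val w ++ ys).
  by rewrite {1}word_eta ew cat_rcons.
exists (y :: ys); first by rewrite /= sz.
rewrite eu; split => //; apply: ck_seq_cons => //.
by rewrite -eu take_size_cat ?size_tuple //; apply/is_ck_vertexE.
Qed.

Lemma ck_seq_walk_len (u v : word d l) ys : ck_seq ord0 l (val u ++ ys) ->
  drop (size ys) (val u ++ ys) = val v -> walk_len u v (size ys).
Proof.
elim: ys u => [|y ys IH] u hs.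
  by rewrite cats0 drop0 => /val_inj <-; exists [::].
pose w : word d l := insubd u (rcons (behead u) y).
have ew : val w = rcons (behead u) y.
  by rewrite val_insubd size_rcons size_behead size_tuple prednK ?eqxx //; lia.
have eu : val u ++ y :: ys = [:: nth ord0 u 0] ++ (val w ++ ys).
  by rewrite {1}word_eta ew cat_rcons.
rewrite eu /= => hd.
have /ck_seq_cat[hu _ _] := hs.
have /ck_seq_cat[_ hws _] : ck_seq ord0 l ([:: nth ord0 u 0] ++ (val w ++ ys)).
  by rewrite -eu.
have /ck_seq_cat[hw _ _] := hws.
have [p [sp [hp lp]]] := IH w hws hd.
exists (w :: p); split; first by rewrite /= sp.
split=> //; rewrite /= hp andbT (ck_arc_rcons ew).
by apply/andP; split; apply/is_ck_vertexE.
Qed.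

Lemma walk_len_gap (u v : word d l) m : 4 <= d -> 0 < m ->
  is_ck_vertex u -> is_ck_vertex v ->
  (forall i, m < i < l -> nth ord0 u i != nth ord0 v (i - m.+1)) ->
  walk_len u v (m + l).
Proof.
move=> hd m_gt0 /is_ck_vertexE hu /is_ck_vertexE hv far.
have huv : ck_joinable ord0 l u m v.
  move=> i j; rewrite !size_tuple => hi hj /orP [] /eqP e; first lia.
  by rewrite (_ : j = i - m.+1); [apply: far; lia | lia].
have card_letters : 4 < #|'I_d.+1| by rewrite card_ord.
have [w sw hs] := ck_seq_fill_gap card_letters l_gt1 hu hv huv.
have := ck_seq_walk_len hs; rewrite size_cat sw size_tuple catA drop_size_cat.
  exact.
by rewrite size_cat sw size_tuple addnC.
Qed.

Lemma ck_dist_le (u v : word d l) : 4 <= d -> 4 <= l ->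
  is_ck_vertex u -> is_ck_vertex v -> dist_le u v (2 * l - 2).
Proof.
move=> hd hl hu hv.
have /is_ck_vertexE hu_seq := hu; have /is_ck_vertexE hv_seq := hv.
have u_next : nth ord0 u l.-2 != nth ord0 u l.-1.
  by rewrite -[l.-1](@prednK l.-1) ?(ck_seq_next hu_seq) ?size_tuple //; lia.
have v_next : nth ord0 v 0 != nth ord0 v 1.
  by rewrite (ck_seq_next hv_seq) ?size_tuple //; lia.
case: (eqVneq (nth ord0 u l.-1) (nth ord0 v 0)) => [e | ne].
  exists (l - 3 + l); first lia.
  apply: walk_len_gap => // [|i hi]; first lia.
  have [->|->] : i = l.-2 \/ i = l.-1 by lia.
    by rewrite (_ : l.-2 - (l - 3).+1 = 0) -?e //; lia.
  by rewrite e (_ : l.-1 - (l - 3).+1 = 1) //; lia.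
exists (l - 2 + l); first lia.
apply: walk_len_gap => // [|i hi]; first lia.
have -> : i = l.-1 by lia.
by rewrite (_ : l.-1 - (l - 2).+1 = 0) //; lia.
Qed.

End Walks.

Section FarPair.

Variables d l : nat.
Hypotheses (d_ge2 : 2 <= d) (l_gt1 : 1 < l).

(* [far_src] = 2 ... 0 1 0 1 (alternating, ending in 1) and
   [far_dst] = 0 2 1 2 1 ... *)
Definition far_src_letter (n : nat) : nat :=
  if n == 0 then 2 else if odd (l.-1 - n) then 0 else 1.

Definition far_dst_letter (n : nat) : nat :=
  if n == 0 then 0 else if odd n then 2 else 1.

Definition far_src : word d l := [tuple inord (far_src_letter i) | i < l].
Definition far_dst : word d l := [tuple inord (far_dst_letter i) | i < l].

Lemma nth_far_src i : i < l -> val (nth ord0 far_src i) = far_src_letter i.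
Proof.
move=> hi; rewrite -[i]/(val (Ordinal hi)) -tnth_nth tnth_mktuple /= inordK //.
by rewrite /far_src_letter; case: ifP => _; [|case: ifP => _]; lia.
Qed.

Lemma nth_far_dst i : i < l -> val (nth ord0 far_dst i) = far_dst_letter i.
Proof.
move=> hi; rewrite -[i]/(val (Ordinal hi)) -tnth_nth tnth_mktuple /= inordK //.
by rewrite /far_dst_letter; case: ifP => _; [|case: ifP => _]; lia.
Qed.

Lemma far_src_vertex : is_ck_vertex far_src.
Proof.
apply/is_ck_vertexE => // i j; rewrite size_tuple => hj /orP [] /eqP ej; subst j;
  apply/eqP => /(congr1 val); rewrite !nth_far_src /far_src_letter //=; try lia.
  rewrite (_ : l.-1 - i = (l.-1 - i.+1).+1) /=; last lia.
  by case: (i == 0); case: (odd _) => /=; lia.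
have l1_gt0 : (l.-1 == 0) = false by lia.
have -> : i = 0 by lia.
by rewrite add0n subnn l1_gt0.
Qed.

Lemma far_dst_vertex : is_ck_vertex far_dst.
Proof.
apply/is_ck_vertexE => // i j; rewrite size_tuple => hj /orP [] /eqP ej; subst j;
  apply/eqP => /(congr1 val); rewrite !nth_far_dst /far_dst_letter //=; try lia.
  by case: (i == 0); case: (odd i) => /=; lia.
have l1_gt0 : (l.-1 == 0) = false by lia.
have -> : i = 0 by lia.
by rewrite add0n l1_gt0 /=; case: (odd _).
Qed.

Section SpelledWalk.

Variables (j : nat) (s : seq 'I_d.+1).
Hypotheses (s_size : size s = l + j)
  (s_src : take l s = far_src) (s_dst : drop j s = far_dst).

Lemma nth_spelled_src i : i < l -> val (nth ord0 s i) = far_src_letter i.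
Proof. by move=> hi; rewrite -(nth_take _ hi) s_src nth_far_src. Qed.

Lemma nth_spelled_dst i : i < l -> val (nth ord0 s (j + i)) = far_dst_letter i.
Proof. by move=> hi; rewrite -nth_drop s_dst nth_far_dst. Qed.

Lemma far_spelled_long : l <= j.
Proof.
rewrite leqNgt; apply/negP => hj.
have := nth_spelled_dst (ltnW l_gt1); rewrite addn0 nth_spelled_src // /far_src_letter.
case: eqP => // _; case: ifP => // odd_j _.
have hj1 : j.+1 < l.
  by move: odd_j; case: (ltnP j.+1 l) => // h; rewrite (_ : l.-1 - j = 0) //; lia.
have := nth_spelled_dst l_gt1; rewrite addn1 nth_spelled_src // /far_src_letter /=.
by rewrite /far_dst_letter /=; case: ifP.
Qed.

Lemma far_spelled_apart : ck_seq ord0 l s -> 2 * l - 3 < j.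
Proof.
move=> hs; rewrite ltnNge; apply/negP => hj.
have l_le_j := far_spelled_long.
have [r er] : {r | r = j.+1 - l} by exists (j.+1 - l).
have r_gt0 : (r == 0) = false by lia.
case odd_r: (odd (l.-1 - r)).
  have r_far : r + l.-1 < size s by rewrite s_size; lia.
  have /eqP := ck_seq_far hs r_far; apply; apply: val_inj.
  rewrite (_ : r + l.-1 = j + 0); last lia.
  by rewrite nth_spelled_src ?nth_spelled_dst /far_src_letter ?r_gt0 ?odd_r //; lia.
have r2_lt : r.+2 < l.
  by move: odd_r; case: (ltnP r.+2 l) => // h; rewrite (_ : l.-1 - r = 1) //; lia.
have r2_far : r.+2 + l.-1 < size s by rewrite s_size; lia.
have /eqP := ck_seq_far hs r2_far; apply; apply: val_inj.
rewrite (_ : r.+2 + l.-1 = j + 2); last lia.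
have odd_r2 : odd (l.-1 - r.+2) = false.
  by move: odd_r; rewrite (_ : l.-1 - r = (l.-1 - r.+2).+2) /= ?negbK //; lia.
rewrite nth_spelled_src // nth_spelled_dst; last lia.
by rewrite /far_src_letter /= odd_r2.
Qed.

End SpelledWalk.

Lemma far_dist : ~ dist_le far_src far_dst (2 * l - 3).
Proof.
case=> j hj /(walk_len_ck_seq l_gt1 far_src_vertex) [ys sz [hs hd]].
have s_size : size (val far_src ++ ys) = l + j by rewrite size_cat size_tuple sz.
have s_src : take l (val far_src ++ ys) = far_src by rewrite take_size_cat ?size_tuple.
by have := far_spelled_apart s_size s_src hd hs; rewrite ltnNge hj.
Qed.

End FarPair.

Theorem theorem1 (d l : nat) (hd : 4 <= d) (hl : 4 <= l) :
  ck_diameter d l (2 * l - 2).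
Proof.
have l_gt1 : 1 < l by lia.
have d_ge2 : 2 <= d by lia.
have src_vertex := far_src_vertex d_ge2 l_gt1.
have dst_vertex := far_dst_vertex d_ge2 l_gt1.
split=> [u v hu hv | ]; first exact: ck_dist_le.
exists (far_src d l), (far_dst d l); split=> //; first exact: ck_dist_le.
by rewrite (_ : (2 * l - 2).-1 = 2 * l - 3); [exact: far_dist | lia].
Qed.
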